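(* Let $m\ge1$, $y\in\mathbb{R}^{2m+1}_+$ with $c:=\sqrt{\sum_{i=0}^{2m}y_i}>0$, and let $(x^t)_{t\ge0}$ be generated by $$x^{t+1}_j=x^t_j\,\frac1c\sum_{\ell=0}^m\frac{x^t_\ell\,y_{\ell+j}}{(x^t*x^t)_{\ell+j}},\qquad j=0,\dots,m,$$ from an initial $x^0\in\mathbb{R}^{m+1}_+$. Let $x^\infty$ be a limit point of $(x^t)$ and assume that $t\mapsto\mathcal{I}(x^\infty\|x^t)$ is decreasing. Then $x^t\to x^\infty$, and $x^\infty$ is the unique limit point of $(x^t)$.
   Context: For $x\in\mathbb{R}^{m+1}$ set $x_k=0$ for $k<0$, $k>m$, and $(x*x)_i=\sum_{j=0}^i x_{i-j}x_j$ for $i=0,\dots,2m$. For nonnegative vectors $u,v$ of equal length, $\mathcal{I}(u\|v)=\sum_i\big(u_i\log\frac{u_i}{v_i}-u_i+v_i\big)$ (convention $0\log0=0$; $+\infty$ if some $u_i>0=v_i$). The iteration is assumed well-defined (denominators positive, e.g. $x^0>0$). *)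

From HB Require Import structures.
From mathcomp Require Import all_boot all_order all_algebra.
From mathcomp Require Import all_classical all_reals all_analysis.
Set Implicit Arguments. Unset Strict Implicit. Unset Printing Implicit Defensive.
Import Order.TTheory GRing.Theory Num.Theory.
Import numFieldNormedType.Exports.
Local Open Scope classical_set_scope.
Local Open Scope ring_scope.

Definition xext (R : realType) (m : nat) (x : 'rV[R]_m.+1) (k : nat) : R :=
  if (k < m.+1)%N then x ord0 (inord k) else 0.

Definition selfconv (R : realType) (m : nat) (x : 'rV[R]_m.+1) (i : nat) : R :=
  \sum_(j < i.+1) xext x (i - j) * xext x j.

Definition yat (R : realType) (m : nat) (y : 'rV[R]_(m.*2).+1) (k : nat) : R :=
  if (k < (m.*2).+1)%N then y ord0 (inord k) else 0.

Definition cconst (R : realType) (m : nat) (y : 'rV[R]_(m.*2).+1) : R :=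
  Num.sqrt (\sum_(i < (m.*2).+1) y ord0 i).

Definition step (R : realType) (m : nat) (y : 'rV[R]_(m.*2).+1)
    (x : 'rV[R]_m.+1) : 'rV[R]_m.+1 :=
  \row_(j < m.+1) (x ord0 j * (cconst y)^-1 *
     \sum_(l < m.+1) (x ord0 l * yat y (l + j) / selfconv x (l + j))).

(* generalized Kullback-Leibler divergence, extended-real valued:
   I(u||v) = sum_i (u_i log(u_i/v_i) - u_i + v_i), 0 log 0 = 0,
   +oo if some u_i > 0 = v_i (for nonnegative u, v). *)
Definition Iterm (R : realType) (a b : R) : \bar R :=
  if a == 0 then b%:E
  else if b == 0 then +oo%E
  else (a * ln (a / b) - a + b)%:E.

Definition Idiv (R : realType) (n : nat) (u v : 'rV[R]_n) : \bar R :=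
  (\sum_(i < n) Iterm (u ord0 i) (v ord0 i))%E.

From HB Require Import structures.
From mathcomp Require Import all_boot all_order all_algebra.
From mathcomp Require Import all_classical all_reals all_analysis.
From mathcomp Require Import ring lra.
Set Implicit Arguments. Unset Strict Implicit. Unset Printing Implicit Defensive.
Import Order.TTheory GRing.Theory Num.Theory.
Import numFieldNormedType.Exports.
Local Open Scope classical_set_scope.
Local Open Scope ring_scope.

(* The divergence dominates the squared Hellinger distance,
   I(a||v) >= (sqrt a - sqrt v)^2, so a small I(x^oo||x^t) forces x^t close to
   x^oo.  Conversely I(x^oo||.) is small near x^oo (it equals v when a = 0 and
   is at most (a - v)^2 / v otherwise), so one visit of the iterates near the
   cluster point x^oo pushes it below any d^2, and monotonicity keeps it there. *)

Section KL_term.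
Variable R : realType.

Lemma ln_le_subr1 (x : R) : 0 < x -> ln x <= x - 1.
Proof.
by move=> x0; have := @le_ln1Dx R (x - 1); rewrite addrCA subrr addr0; apply; lra.
Qed.

Lemma Iterm_ge_sqr_sub_sqrt (a v : R) : 0 <= a -> 0 <= v ->
  (((Num.sqrt a - Num.sqrt v) ^+ 2)%:E <= Iterm a v)%E.
Proof.
move=> a0 v0; rewrite /Iterm.
have [->|an0] := eqVneq a 0; first by rewrite sqrtr0 sub0r sqrrN sqr_sqrtr.
have [->|vn0] := eqVneq v 0; first by rewrite leey.
rewrite lee_fin -{2 3 4}(sqr_sqrtr a0) -{2 3}(sqr_sqrtr v0).
have sa0 : 0 < Num.sqrt a by rewrite sqrtr_gt0 lt_def an0.
have sv0 : 0 < Num.sqrt v by rewrite sqrtr_gt0 lt_def vn0.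
move: sa0 sv0; set sa := Num.sqrt a; set sv := Num.sqrt v => sa0 sv0.
rewrite -expr_div_n lnXn ?divr_gt0 // -invf_div lnV ?posrE ?divr_gt0 //.
have := ln_le_subr1 (divr_gt0 sv0 sa0).
have -> : sv / sa - 1 = (sv - sa) / sa by rewrite mulrBl divff ?gt_eqF.
rewrite ler_pdivlMr // => hln; nra.
Qed.

Lemma Iterm_ge0 (a v : R) : 0 <= a -> 0 <= v -> (0 <= Iterm a v)%E.
Proof.
move=> a0 v0; apply: le_trans (Iterm_ge_sqr_sub_sqrt a0 v0).
by rewrite lee_fin sqr_ge0.
Qed.

Lemma Iterm_le_sqr_sub_div (a v : R) : 0 < a -> 0 < v ->
  (Iterm a v <= ((a - v) ^+ 2 / v)%:E)%E.
Proof.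
move=> a0 v0; rewrite /Iterm !gt_eqF // lee_fin.
have -> : (a - v) ^+ 2 / v = a * (a / v - 1) - a + v by field; rewrite gt_eqF.
by rewrite !lerD2r ler_pM2l // ln_le_subr1 ?divr_gt0.
Qed.

Lemma Iterm_lt_sqr_dist (a v d : R) : 0 <= a -> 0 <= v -> 0 <= d ->
  (Iterm a v < (d ^+ 2)%:E)%E -> `|a - v| < d * (2 * Num.sqrt a + d).
Proof.
move=> a0 v0 d0 /(le_lt_trans (Iterm_ge_sqr_sub_sqrt a0 v0)); rewrite lte_fin.
have -> : a - v = (Num.sqrt a - Num.sqrt v) * (Num.sqrt a + Num.sqrt v).
  by rewrite -subr_sqr !sqr_sqrtr.
have := sqrtr_ge0 a; have := sqrtr_ge0 v.
set sa := Num.sqrt a; set sv := Num.sqrt v => sv0 sa0.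
rewrite normrM (ger0_norm (addr_ge0 sa0 sv0)) -real_normK ?num_real //.
have svs : sv - sa <= `|sa - sv| by rewrite distrC ler_norm.
have := normr_ge0 (sa - sv); move: svs; set s := `|sa - sv| => svs s0 hsd.
have sd : s < d by rewrite -(ltr_pXn2r (_ : 0 < 2)%N) ?nnegrE.
nra.
Qed.

Lemma near_Iterm_lt (a e : R) : 0 <= a -> 0 < e ->
  \forall v \near a, 0 <= v -> (Iterm a v < e%:E)%E.
Proof.
move=> a0 e0; have [->|an0] := eqVneq a 0.
  by apply: filterS (cvgr_lt _ cvg_id _ e0) => v ve _; rewrite /Iterm eqxx lte_fin.
have {an0 a0} a0 : 0 < a by rewrite lt_def an0.
have ea0 : 0 < e * a / 2 by rewrite divr_gt0 ?mulr_gt0.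
near=> v => v0.
have va : a / 2 < v by near: v; apply: cvgr_gt _ cvg_id _ _; lra.
have s1 : `|a - v| < 1 by near: v; exact: cvgr_dist_lt _ _ cvg_id _ ltr01.
have sea : `|a - v| < e * a / 2 by near: v; exact: cvgr_dist_lt _ _ cvg_id _ ea0.
have v0' : 0 < v by apply: lt_trans va; rewrite divr_gt0.
apply: le_lt_trans (Iterm_le_sqr_sub_div a0 v0') _.
rewrite lte_fin ltr_pdivrMr // -real_normK ?num_real //.
have := normr_ge0 (a - v); move: s1 sea; set s := `|a - v| => s1 sea s0.
nra.
Unshelve. all: by end_near.
Qed.

End KL_term.

Section divergence.
Variables (R : realType) (n : nat).

Lemma Iterm_le_Idiv (u w : 'rV[R]_n) j :
  (forall i, 0 <= u ord0 i) -> (forall i, 0 <= w ord0 i) ->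
  (Iterm (u ord0 j) (w ord0 j) <= Idiv u w)%E.
Proof.
move=> u0 w0; rewrite /Idiv (bigD1 j) //= leeDl // sume_ge0 // => i _.
exact: Iterm_ge0.
Qed.

Lemma near_Idiv_lt (u : 'rV[R]_n) e : (forall j, 0 <= u ord0 j) -> 0 < e ->
  \forall w \near u, (forall j, 0 <= (w : 'rV[R]_n) ord0 j) -> (Idiv u w < e%:E)%E.
Proof.
move=> u0 e0; set e' := e / n.+1%:R.
have e'0 : 0 < e' by rewrite divr_gt0.
have near_j j : \forall w \near u,
    0 <= (w : 'rV[R]_n) ord0 j -> (Iterm (u ord0 j) (w ord0 j) < e'%:E)%E.
  exact: coord_continuous (near_Iterm_lt (u0 j) e'0).
apply: filterS (filter_forall _ near_j) => w small w0.
apply: (@le_lt_trans _ _ (\sum_(j < n) e'%:E)%E).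
  by apply: lee_sum => j _; exact/ltW/small.
rewrite sumEFin sumr_const card_ord lte_fin -[e' *+ n]mulr_natr /e' mulrAC.
by rewrite ltr_pdivrMr // ltr_pM2l // ltr_nat.
Qed.

End divergence.

Lemma cluster_seq_near {T : topologicalType} (w : nat -> T) (u : T) (P : set T) :
  cluster (w @ \oo) u -> (\forall v \near u, P v) -> exists t, P (w t).
Proof.
move=> clu nP; have range_w : (w @ \oo) (range w) by exists 0%N => // t _; exists t.
by have [_ [[t _ <-] Pwt]] := clu _ _ range_w nP; exists t.
Qed.

Lemma cluster_seq_row_ge0 (R : realType) n (w : nat -> 'rV[R]_n) u :
  (forall t j, 0 <= w t ord0 j) -> cluster (w @ \oo) u ->
  forall j, 0 <= u ord0 j.
Proof.
move=> w0 clu j; rewrite leNgt; apply/negP => uj0.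
have near_neg : \forall v \near u, (v : 'rV[R]_n) ord0 j < 0.
  exact: coord_continuous (cvgr_lt _ cvg_id _ uj0).
by have [t] := cluster_seq_near clu near_neg; rewrite ltNge w0.
Qed.

Lemma Idiv_nonincreasing_cvg (R : realType) n (w : nat -> 'rV[R]_n) u :
  (forall t j, 0 <= w t ord0 j) -> cluster (w @ \oo) u ->
  {homo (fun t => Idiv u (w t)) : s t / (s <= t)%N >-> (t <= s)%E} ->
  w @ \oo --> u.
Proof.
move=> w0 clu Idiv_noninc; have u0 := cluster_seq_row_ge0 w0 clu.
apply/cvg_ballP => e e0.
set K := \sum_(j < n) Num.sqrt (u ord0 j).
have sqrt_le_K j : Num.sqrt (u ord0 j) <= K.
  by rewrite /K (bigD1 j) //= lerDl sumr_ge0 // => i _; rewrite sqrtr_ge0.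
have K0 : 0 <= K by rewrite sumr_ge0 // => i _; rewrite sqrtr_ge0.
set d := Num.min 1 (e / (2 * K + 1)).
have d0 : 0 < d by rewrite lt_min ltr01 divr_gt0 //; lra.
have d1 : d <= 1 by rewrite ge_min lexx.
have dK : d * (2 * K + 1) <= e by rewrite -ler_pdivlMr ?ge_min ?lexx ?orbT //; lra.
have [t0 small] := cluster_seq_near clu (near_Idiv_lt u0 (exprn_gt0 2 d0)).
exists t0 => // t /= t0t; split => // i j; rewrite (ord1 i) /ball /=.
have Idiv_small := le_lt_trans (Idiv_noninc _ _ t0t) (small (w0 t0)).
have := Iterm_lt_sqr_dist (u0 j) (w0 t j) (ltW d0)
  (le_lt_trans (Iterm_le_Idiv j u0 (w0 t)) Idiv_small).
have := sqrt_le_K j; have := sqrtr_ge0 (u ord0 j); nra.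
Qed.

Section iteration.
Variables (R : realType) (m : nat) (y : 'rV[R]_(m.*2).+1).
Hypothesis y_ge0 : forall i, 0 <= y ord0 i.

Lemma selfconv_ge0 (x : 'rV[R]_m.+1) i :
  (forall j, 0 <= x ord0 j) -> 0 <= selfconv x i.
Proof.
move=> x0; have xext_ge0 k : 0 <= xext x k by rewrite /xext; case: ifP.
by apply: sumr_ge0 => j _; rewrite mulr_ge0.
Qed.

(* No positivity of the denominators or of [cconst y] is needed: [x / 0 = 0]. *)
Lemma step_ge0 (x : 'rV[R]_m.+1) :
  (forall j, 0 <= x ord0 j) -> forall j, 0 <= step y x ord0 j.
Proof.
move=> x0 j; have yat_ge0 k : 0 <= yat y k by rewrite /yat; case: ifP.
rewrite mxE !mulr_ge0 ?invr_ge0 ?sqrtr_ge0 ?sumr_ge0 // => l _.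
by rewrite divr_ge0 ?mulr_ge0 ?selfconv_ge0.
Qed.

Lemma iter_step_ge0 (x : nat -> 'rV[R]_m.+1) :
  (forall j, 0 <= x 0%N ord0 j) -> (forall t, x t.+1 = step y (x t)) ->
  forall t j, 0 <= x t ord0 j.
Proof. by move=> x00 xS; elim=> [|t IH] //; rewrite xS; exact: step_ge0. Qed.

End iteration.

Theorem proposition7 (R : realType) (m : nat) (hm : (1 <= m)%N)
    (y : 'rV[R]_(m.*2).+1) (x : nat -> 'rV[R]_m.+1) (xinf : 'rV[R]_m.+1) :
  (forall i, 0 <= y ord0 i) ->
  0 < cconst y ->
  (forall j, 0 <= x 0%N ord0 j) ->
  (forall t (i : nat), (i <= m.*2)%N -> 0 < selfconv (x t) i) ->
  (forall t, x t.+1 = step y (x t)) ->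
  cluster (x @ \oo) xinf ->
  {homo (fun t => Idiv xinf (x t)) : s t / (s <= t)%N >-> (t <= s)%E} ->
  x @ \oo --> xinf /\ (forall z, cluster (x @ \oo) z -> z = xinf).
Proof.
move=> y0 _ x00 _ xS clu Idiv_noninc.
have x_cvg := Idiv_nonincreasing_cvg (iter_step_ge0 y0 x00 xS) clu Idiv_noninc.
by split=> // z /(cvg_cluster x_cvg) /norm_hausdorff ->.
Qed.
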